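(* Let $(M,d)$ be a pointed metric space. The space $\mathrm{Lip}_0(M)$ has the LD2P if and only if for every optimal $\mu\in ba(\widetilde M)$ with $\|\mu\|=1$ and every $\gamma\in(0,1)$ there exist $A\subseteq\widetilde M$ and $u,v\in M$ with $u\ne v$ such that $\mu(A)\ge\gamma$ and both $A\cup\{(u,v)\}$ and $A\cup\{(v,u)\}$ are $\gamma$-cyclically monotonic.
   Context: $M$ has base point $0$; $\mathrm{Lip}_0(M)$ is the real Banach space of Lipschitz $f\colon M\to\mathbb R$ with $f(0)=0$, normed by the best Lipschitz constant. A Banach space $X$ has the local diameter 2 property (LD2P) if every slice $S(x^*,\alpha)=\{x\in B_X: x^*(x)>1-\alpha\}$ ($x^*\in X^*$, $\|x^*\|=1$, $\alpha>0$) of the unit ball has diameter $2$. $\widetilde M=\{(x,y)\in M\times M:x\ne y\}$. $ba(\widetilde M)$ is the Banach space of bounded finitely additive signed measures on the power set of $\widetilde M$ with norm $|\mu|(\widetilde M)$. $\Phi f(x,y)=(f(x)-f(y))/d(x,y)$ (de Leeuw map) and $(\Phi^*\mu)(f)=\int_{\widetilde M}\Phi f\,d\mu$. $\mu$ is optimal if it is positive and $\|\Phi^*\mu\|=\|\mu\|$. For $\gamma\in(0,1]$, $A\subseteq\widetilde M$ is $\gamma$-cyclically monotonic if for every finite sequence $(x_1,y_1),\dots,(x_n,y_n)\in A$, with $y_{n+1}=y_1$, $\sum_{i=1}^n\min\{d(x_i,y_{i+1})-\gamma d(x_i,y_i),\,d(y_i,y_{i+1})\}\ge0$. *)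

From HB Require Import structures.
From mathcomp Require Import all_boot all_order all_algebra.
From mathcomp Require Import all_classical all_reals.
Set Implicit Arguments. Unset Strict Implicit. Unset Printing Implicit Defensive.
Import Order.TTheory GRing.Theory Num.Theory.
Local Open Scope ring_scope.
Local Open Scope classical_set_scope.

Section Defs.
Variables (R : realType) (M : Type) (d : M -> M -> R) (z : M).

Definition is_metric : Prop :=
  (forall x y, 0 <= d x y) /\ (forall x y, d x y = 0 <-> x = y) /\
  (forall x y, d x y = d y x) /\ (forall x y w, d x w <= d x y + d y w).

Definition lipschitz (f : M -> R) : Prop :=
  exists L : R, forall x y, `|f x - f y| <= L * d x y.

Definition Lip0 : set (M -> R) := [set f | lipschitz f /\ f z = 0].

Definition lipnorm (f : M -> R) : R :=
  sup [set r | exists x y, x <> y /\ r = `|f x - f y| / d x y].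

Definition unit_ball : set (M -> R) := [set f | Lip0 f /\ lipnorm f <= 1].

(** elements of the dual Lip0(M)^*: bounded linear functionals on Lip0(M)
    (represented as maps (M -> R) -> R whose behaviour off Lip0(M) is irrelevant) *)
Definition is_dual (phi : (M -> R) -> R) : Prop :=
  (forall (a : R) f g, Lip0 f -> Lip0 g ->
      phi (fun x => a * f x + g x) = a * phi f + phi g) /\
  (exists C : R, forall f, Lip0 f -> `|phi f| <= C * lipnorm f).

Definition dualnorm (phi : (M -> R) -> R) : R :=
  sup [set r | exists f, unit_ball f /\ r = `|phi f|].

Definition slice (phi : (M -> R) -> R) (alpha : R) : set (M -> R) :=
  [set f | unit_ball f /\ 1 - alpha < phi f].

Definition diam_Lip (S : set (M -> R)) : R :=
  sup [set r | exists f g, S f /\ S g /\ r = lipnorm (fun x => f x - g x)].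

Definition LD2P : Prop :=
  forall phi, is_dual phi -> dualnorm phi = 1 ->
  forall alpha : R, 0 < alpha -> diam_Lip (slice phi alpha) = 2.

Definition Mt := {p : M * M | p.1 <> p.2}.

Definition deLeeuw (f : M -> R) (p : Mt) : R :=
  (f (proj1_sig p).1 - f (proj1_sig p).2) / d (proj1_sig p).1 (proj1_sig p).2.

Definition disj_family (n : nat) (A : nat -> set Mt) : Prop :=
  forall i j, (i < n)%N -> (j < n)%N -> i <> j -> A i `&` A j = set0.

Definition fin_additive (mu : set Mt -> R) : Prop :=
  forall A B, A `&` B = set0 -> mu (A `|` B) = mu A + mu B.

Definition totvar (mu : set Mt -> R) : R :=
  sup [set r | exists n A, disj_family n A /\ r = \sum_(i < n) `|mu (A i)|].

Definition is_ba (mu : set Mt -> R) : Prop :=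
  fin_additive mu /\
  exists C : R, forall n A, disj_family n A -> \sum_(i < n) `|mu (A i)| <= C.

Definition positive_measure (mu : set Mt -> R) : Prop := forall A, 0 <= mu A.

(** integral of a bounded function w.r.t. a POSITIVE finitely additive measure
    on the power set: supremum of the lower sums over finite partitions *)
Definition pos_integral (mu : set Mt -> R) (g : Mt -> R) : R :=
  sup [set r | exists n A, disj_family n A /\
        (forall p, exists i, (i < n)%N /\ A i p) /\
        r = \sum_(i < n) inf (g @` A i) * mu (A i)].

Definition Phistar (mu : set Mt -> R) : (M -> R) -> R :=
  fun f => pos_integral mu (deLeeuw f).

Definition optimal (mu : set Mt -> R) : Prop :=
  is_ba mu /\ positive_measure mu /\ dualnorm (Phistar mu) = totvar mu.

Definition cyc_monotone (gamma : R) (B : set (M * M)) : Prop :=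
  forall (n : nat) (s : nat -> M * M), (0 < n)%N ->
    (forall i, (i < n)%N -> B (s i)) ->
    0 <= \sum_(i < n) Num.min (d (s i).1 (s (i.+1 %% n)%N).2 - gamma * d (s i).1 (s i).2)
                               (d (s i).2 (s (i.+1 %% n)%N).2).

End Defs.

From HB Require Import structures.
From mathcomp Require Import all_boot all_order all_algebra.
From mathcomp Require Import all_classical all_reals numfun.
From mathcomp Require Import ring lra zify.
Import Order.TTheory GRing.Theory Num.Theory.
Local Open Scope ring_scope.
Local Open Scope classical_set_scope.
Set Implicit Arguments. Unset Strict Implicit. Unset Printing Implicit Defensive.

(* Necessity: [Phi^* mu] is a norm-one functional, so by the LD2P a thin slice of it
   contains [f], [g] with [f - g] of norm almost 2.  Both have de Leeuw transform at
   least [gamma] on a set [A] of large measure, a pair [(u, v)] where [f - g] nearly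
   doubles the distance is the extra pair, and [f], [g] are potentials certifying
   cyclic monotonicity.
   Sufficiency: by Hahn-Banach a norm-one [phi] extends from the de Leeuw image of
   [Lip0] to all bounded functions on [Mt], below the supremum; its values on
   indicators form an optimal [mu] representing [phi].  Rockafellar's construction
   turns the cyclically monotone sets given for [mu] into 1-Lipschitz potentials
   [F1], [F2]; both lie in the slice, and [F1 - F2] stretches [(u, v)] by [2 gamma]. *)

Lemma sup_le_ge0 (R : realType) (E : set R) (B : R) :
  ubound E B -> 0 <= B -> sup E <= B.
Proof.
move=> EB B0; have [E0|E0] := pselect (E !=set0); first exact: ge_sup.
suff -> : E = set0 by rewrite sup0.
by apply/seteqP; split => // x Ex; apply: E0; exists x.
Qed.

Lemma sup_neq0_nonempty (R : realType) (E : set R) : sup E != 0 -> E !=set0.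
Proof.
move=> supE; apply: contrapT => E0; move: supE; suff -> : E = set0 by rewrite sup0 eqxx.
by apply/seteqP; split => // x Ex; apply: E0; exists x.
Qed.

Section HahnBanach.
Variables (R : realType) (T : Type).

Definition axpy (a : R) (x y : T -> R) : T -> R := fun t => a * x t + y t.

Lemma axpyN1 (x : T -> R) : axpy (-1) x x = cst 0.
Proof. by apply/funext => t; rewrite /axpy /cst; ring. Qed.

Variables (D : set (T -> R)) (p : (T -> R) -> R).
Hypotheses (D_axpy : forall a x y, D x -> D y -> D (axpy a x y))
  (p_subadd : forall x y, D x -> D y -> p (axpy 1 x y) <= p x + p y)
  (p_homo : forall a x, 0 < a -> D x -> p (axpy a x (cst 0)) = a * p x).

(* The graph of a linear functional on a subspace of [D], dominated by [p]. *)
Definition dominated_graph (G : set ((T -> R) * R)) :=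
  [/\ forall x r r', G (x, r) -> G (x, r') -> r = r',
      forall a x y r s, G (x, r) -> G (y, s) -> G (axpy a x y, a * r + s),
      forall x r, G (x, r) -> r <= p x &
      forall x r, G (x, r) -> D x].

Lemma dominated_graph0 G x r : dominated_graph G -> G (x, r) -> G (cst 0, 0).
Proof.
case=> _ G_axpy _ _ Gx; have := G_axpy (-1) x x r r Gx Gx.
by rewrite axpyN1 mulN1r addNr.
Qed.

Lemma dominated_graphZ G a x r :
  dominated_graph G -> G (x, r) -> G (axpy a x (cst 0), a * r).
Proof.
move=> gG Gx; have [_ G_axpy _ _] := gG.
by have := G_axpy a x _ r 0 Gx (dominated_graph0 gG Gx); rewrite addr0.
Qed.

Section OneStepExtension.
Variables (G : set ((T -> R) * R)) (x0 : T -> R).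
Hypotheses (gG : dominated_graph G) (G0 : G (cst 0, 0)) (Dx0 : D x0).

(* Every lower bound is below every upper bound by subadditivity of [p]. *)
Lemma extension_value : exists c,
  (forall y s, G (y, s) -> s - p (axpy (-1) x0 y) <= c) /\
  (forall y s, G (y, s) -> c <= p (axpy 1 x0 y) - s).
Proof.
have [_ G_axpy G_le D_G] := gG.
pose lo := [set v | exists y s, G (y, s) /\ v = s - p (axpy (-1) x0 y)].
have lo_le_up y s y' s' : G (y, s) -> G (y', s') ->
    s - p (axpy (-1) x0 y) <= p (axpy 1 x0 y') - s'.
  move=> Gy Gy'; have := G_le _ _ (G_axpy 1 y y' s s' Gy Gy').
  have -> : axpy 1 y y' = axpy 1 (axpy (-1) x0 y) (axpy 1 x0 y').
    by apply/funext => t; rewrite /axpy; ring.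
  have := p_subadd (D_axpy (-1) Dx0 (D_G _ _ Gy)) (D_axpy 1 Dx0 (D_G _ _ Gy')).
  lra.
exists (sup lo); split => [y s Gy|y s Gy].
  apply: ub_le_sup; last by exists y, s.
  by exists (p (axpy 1 x0 y) - s) => _ [y' [s' [Gy' ->]]]; exact: lo_le_up.
apply: ge_sup; first by exists (0 - p (axpy (-1) x0 (cst 0))), (cst 0), 0.
by move=> _ [y' [s' [Gy' ->]]]; exact: lo_le_up.
Qed.

Variable c : R.
Hypotheses (c_ge : forall y s, G (y, s) -> s - p (axpy (-1) x0 y) <= c)
  (c_le : forall y s, G (y, s) -> c <= p (axpy 1 x0 y) - s).

Definition graph_extension := [set q | exists x r t, G (x, r) /\ q = (axpy t x0 x, r + t * c)].

Lemma graph_extension_functional : ~ (exists r, G (x0, r)) ->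
  forall x r r', graph_extension (x, r) -> graph_extension (x, r') -> r = r'.
Proof.
have [G_fun G_axpy _ _] := gG.
move=> Gx0 x r r' [x1 [r1 [t1 [G1 [= -> ->]]]]] [x2 [r2 [t2 [G2 [= e12 ->]]]]].
have e12t t : t1 * x0 t + x1 t = t2 * x0 t + x2 t by have := congr1 (fun f => f t) e12.
have [e|t12] := eqVneq t1 t2.
  subst t2; have ex : x1 = x2 by apply/funext => t; have := e12t t; lra.
  by subst x2; rewrite (G_fun _ _ _ G1 G2).
exfalso; apply: Gx0; exists ((t1 - t2)^-1 * (-1 * r1 + r2)).
have -> : x0 = axpy (t1 - t2)^-1 (axpy (-1) x1 x2) (cst 0).
  apply/funext => t; have := e12t t; rewrite /axpy /= addr0 => e.
  have t12' : t1 - t2 != 0 by rewrite subr_eq0.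
  apply: (mulfI t12'); rewrite mulrA mulfV // mul1r; lra.
exact: dominated_graphZ gG (G_axpy (-1) _ _ _ _ G1 G2).
Qed.

Lemma graph_extension_dominated x r : graph_extension (x, r) -> r <= p x.
Proof.
have [_ _ G_le D_G] := gG.
move=> [x1 [r1 [t [G1 [= -> ->]]]]].
have D1 a b : D (axpy b x0 (axpy a x1 (cst 0))).
  exact: D_axpy Dx0 (D_axpy _ (D_G _ _ G1) (D_G _ _ G0)).
have [t0|t0|->] := ltrgt0P t.
- have G1' := dominated_graphZ t^-1 gG G1.
  have e : axpy t x0 x1 = axpy t (axpy 1 x0 (axpy t^-1 x1 (cst 0))) (cst 0).
    by apply/funext => t'; rewrite /axpy /cst; field; lra.
  rewrite e p_homo //; have := ler_wpM2l (ltW t0) (c_le G1').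
  by rewrite mulrBr mulrA mulfV ?mul1r; lra.
- have G1' := dominated_graphZ (- t)^-1 gG G1.
  have e : axpy t x0 x1 = axpy (- t) (axpy (-1) x0 (axpy (- t)^-1 x1 (cst 0))) (cst 0).
    by apply/funext => t'; rewrite /axpy /cst; field; lra.
  rewrite e p_homo ?oppr_gt0 //; have tN : 0 < - t by rewrite oppr_gt0.
  have := ler_wpM2l (ltW tN) (c_ge G1'); rewrite mulrBr mulrA mulfV ?mul1r; lra.
- have -> : axpy 0 x0 x1 = x1 by apply/funext => t'; rewrite /axpy mul0r add0r.
  by rewrite mul0r addr0; exact: G_le G1.
Qed.

Lemma graph_extension_extends : ~ (exists r, G (x0, r)) ->
  dominated_graph graph_extension /\ G `<=` graph_extension /\ graph_extension (x0, c).
Proof.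
move=> Gx0; have [_ G_axpy _ D_G] := gG.
split; last split.
- split.
  + exact: graph_extension_functional.
  + move=> a x y r s [x1 [r1 [t1 [G1 [= -> ->]]]]] [x2 [r2 [t2 [G2 [= -> ->]]]]].
    exists (axpy a x1 x2), (a * r1 + r2), (a * t1 + t2); split; first exact: G_axpy.
    by congr pair; [apply/funext => t; rewrite /axpy|]; ring.
  + exact: graph_extension_dominated.
  + by move=> x r [x1 [r1 [t1 [G1 [= -> _]]]]]; exact: D_axpy Dx0 (D_G _ _ G1).
- move=> [x r] Gx; exists x, r, 0; split => //.
  by congr pair; [apply/funext => t; rewrite /axpy|]; ring.
- exists (cst 0), 0, 1; split => //.
  by congr pair; [apply/funext => t; rewrite /axpy /cst|]; ring.
Qed.

End OneStepExtension.

Lemma dominated_graph_extend G x0 :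
  dominated_graph G -> G (cst 0, 0) -> D x0 -> ~ (exists r, G (x0, r)) ->
  exists G' r, [/\ dominated_graph G', G `<=` G' & G' (x0, r)].
Proof.
move=> gG G0 Dx0 Gx0; have [c [c_ge c_le]] := extension_value gG G0 Dx0.
have [gE [GE Ex0]] := graph_extension_extends gG G0 Dx0 c_ge c_le Gx0.
by exists (graph_extension G x0 c), c.
Qed.

Lemma dominated_graph_chain (G0 : set ((T -> R) * R)) : dominated_graph G0 ->
  forall F : set (set ((T -> R) * R)), F `<=` (fun A => dominated_graph (A `|` G0)) ->
  total_on F subset -> dominated_graph ((\bigcup_(A in F) A) `|` G0).
Proof.
move=> gG0 F gF tot; set U := _ `|` G0.
have pair_in q1 q2 : U q1 -> U q2 -> exists S, [/\ dominated_graph S, S `<=` U, S q1 & S q2].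
  have sub A : F A -> A `|` G0 `<=` U by move=> FA q [Aq|Gq]; [left; exists A|right].
  move=> [[A1 FA1 A1q]|G1] [[A2 FA2 A2q]|G2].
  - have [s12|s21] := tot _ _ FA1 FA2.
      by exists (A2 `|` G0); split; [exact: gF|exact: sub|left; exact: s12|left].
    by exists (A1 `|` G0); split; [exact: gF|exact: sub|left|left; exact: s21].
  - by exists (A1 `|` G0); split; [exact: gF|exact: sub|left|right].
  - by exists (A2 `|` G0); split; [exact: gF|exact: sub|right|left].
  - by exists G0; split => // q Gq; right.
split.
- move=> x r r' h1 h2; have [S [[S_fun _ _ _] _ S1 S2]] := pair_in _ _ h1 h2.
  exact: S_fun S1 S2.
- move=> a x y r s h1 h2; have [S [[_ S_axpy _ _] SU S1 S2]] := pair_in _ _ h1 h2.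
  exact/SU/S_axpy.
- by move=> x r h; have [S [[_ _ S_le _] _ S1 _]] := pair_in _ _ h h; exact: S_le S1.
- by move=> x r h; have [S [[_ _ _ D_S] _ S1 _]] := pair_in _ _ h h; exact: D_S S1.
Qed.

Theorem hahn_banach G0 : dominated_graph G0 -> G0 (cst 0, 0) ->
  exists L : (T -> R) -> R,
    [/\ forall a x y, D x -> D y -> L (axpy a x y) = a * L x + L y,
        forall x, D x -> L x <= p x &
        forall x r, G0 (x, r) -> L x = r].
Proof.
move=> gG0 G00.
have [A [gA Amax]] := Zorn_bigcup (dominated_graph_chain gG0).
set H := A `|` G0.
have H_total x : D x -> exists r, H (x, r).
  move=> Dx; apply: contrapT => Hx.
  have [G' [r [gG' HG' G'x]]] := dominated_graph_extend gA (or_intror G00) Dx Hx.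
  apply: (Amax G'); last first.
    suff -> : G' `|` G0 = G' by [].
    by apply/seteqP; split => [q [//|G0q]|q G'q]; [apply: HG'; right|left].
  split; first by move=> q Aq; apply: HG'; left.
  by move=> G'A; apply: Hx; exists r; left; exact: G'A.
have [L HL] : exists L : (T -> R) -> R, forall x, D x -> H (x, L x).
  suff /choice [L HL] : forall x, exists r, D x -> H (x, r) by exists L.
  move=> x; by have [/H_total [r Hr]|Dx] := pselect (D x); [exists r|exists 0].
have [H_fun H_axpy H_le D_H] := gA.
exists L; split.
- move=> a x y Dx Dy; apply: H_fun (HL _ (D_axpy a Dx Dy)) _.
  exact: H_axpy (HL _ Dx) (HL _ Dy).
- by move=> x Dx; exact: H_le (HL _ Dx).
- by move=> x r G0x; apply: H_fun (HL _ (D_H _ _ (or_intror G0x))) _; right.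
Qed.

End HahnBanach.

Section FinitelyAdditiveIntegral.
Variables (R : realType) (M : Type) (mu : set (Mt M) -> R).
Hypotheses (mu_add : fin_additive mu) (mu_ge0 : positive_measure mu).

Definition covers n (P : nat -> set (Mt M)) := forall p, exists i, (i < n)%N /\ P i p.

Definition lower_sum n (P : nat -> set (Mt M)) (h : Mt M -> R) :=
  \sum_(i < n) inf (h @` P i) * mu (P i).

Definition bounded (h : Mt M -> R) := exists C : R, forall p, `|h p| <= C.

Lemma mu_set0 : mu set0 = 0.
Proof. by have := mu_add (setI0 set0); rewrite setU0; lra. Qed.

Lemma mu_setT_inhabited : mu setT != 0 -> inhabited (Mt M).
Proof.
move=> muT; apply: contrapT => Mt0; move: muT; suff -> : [set: Mt M] = set0 by rewrite mu_set0 eqxx.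
by apply/seteqP; split => // p _; apply: Mt0; exists.
Qed.

Lemma mu_setIC S B : mu S = mu (S `&` B) + mu (S `&` ~` B).
Proof.
rewrite -mu_add; last by apply/seteqP; split => // p [[_ ?] [_ ?]].
by rewrite -setIUr setUv setIT.
Qed.

Lemma le_mu S S' : S `<=` S' -> mu S <= mu S'.
Proof.
move=> SS'; rewrite (mu_setIC S' S) (setIidr SS') lerDl; exact: mu_ge0.
Qed.

Lemma le_mu_setU S S' : mu (S `|` S') <= mu S + mu S'.
Proof.
have -> : S `|` S' = S `|` (S' `&` ~` S).
  apply/seteqP; split => p; last by case=> [|[]]; [left|right].
  by have [Sp|nSp] := pselect (S p) => -[]; [left|left|left|right].
rewrite mu_add; first by rewrite lerD2l le_mu // => p [].
by apply/seteqP; split => // p [? [_ ?]].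
Qed.

Lemma disj_familyP n (Q : nat -> set (Mt M)) i j p : disj_family n Q ->
  (i < n)%N -> (j < n)%N -> Q i p -> Q j p -> i = j.
Proof.
move=> dQ ilt jlt Qi Qj; apply: contrapT => ij.
by have /seteqP[+ _] := dQ i j ilt jlt ij; move/(_ p (conj Qi Qj)).
Qed.

Lemma mu_partition n (Q : nat -> set (Mt M)) S : disj_family n Q ->
  S `<=` (fun p => exists i, (i < n)%N /\ Q i p) ->
  mu S = \sum_(i < n) mu (S `&` Q i).
Proof.
elim: n Q S => [|n IH] Q S dQ SQ.
  rewrite big_ord0; suff -> : S = set0 by exact: mu_set0.
  by apply/seteqP; split => // p /SQ [i []].
have dQ' : disj_family n Q by move=> i j ilt jlt; apply: dQ; apply: ltnW.
rewrite big_ord_recr /= (mu_setIC S (Q n)) addrC (IH Q (S `&` ~` Q n)) //; last first.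
  move=> p [/SQ [i [ilt Qi]] nQn]; exists i; split => //.
  by move: ilt; rewrite ltnS leq_eqVlt => /orP[/eqP ein|//]; subst i; case: (nQn Qi).
congr (_ + _); apply: eq_bigr => i _; congr mu; rewrite -setIA; congr (_ `&` _).
apply/seteqP; split => [p [Qi _] //|p Qi]; split => // Qn.
have := disj_familyP dQ (ltn_trans (ltn_ord i) (ltnSn n)) (ltnSn n) Qi Qn.
by move=> ein; have := ltn_ord i; rewrite ein ltnn.
Qed.

Lemma mu_partitionT n P : disj_family n P -> covers n P ->
  \sum_(i < n) mu (P i) = mu setT.
Proof.
move=> dP cP; rewrite (mu_partition (S := setT) dP) => [|p _]; last exact: cP.
by apply: eq_bigr => i _; rewrite setTI.
Qed.

Lemma disj_family1 : disj_family 1 (cst [set: Mt M]).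
Proof. by move=> [|i] [|j]. Qed.

Lemma covers1 : covers 1 (cst [set: Mt M]).
Proof. by move=> p; exists 0%N. Qed.

(* Both sums are compared on the common refinement [P i `&` Q j]. *)
Lemma lower_sum_le n P (b : nat -> R) h m Q :
  disj_family n P -> covers n P ->
  (forall i, (i < n)%N -> forall p, P i p -> h p <= b i) ->
  (exists lo, forall p, lo <= h p) -> disj_family m Q -> covers m Q ->
  lower_sum m Q h <= \sum_(i < n) b i * mu (P i).
Proof.
move=> dP cP hb [lo hlo] dQ cQ; rewrite /lower_sum.
under eq_bigr => j _ do rewrite (mu_partition (S := Q j) dP (fun p _ => cP p)) mulr_sumr.
under [leRHS]eq_bigr => i _ do rewrite (mu_partition (S := P i) dQ (fun p _ => cQ p)) mulr_sumr.
rewrite [leRHS]exchange_big /=; apply: ler_sum => j _; apply: ler_sum => i _.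
rewrite setIC; have [[p [Qp Pp]]|PQ0] := pselect (exists p, (P i `&` Q j) p).
  apply: ler_wpM2r; first exact: mu_ge0.
  apply: le_trans (hb i (ltn_ord i) p Qp).
  by apply: ge_inf (imageP h Pp); exists lo => _ [q _ <-].
suff -> : P i `&` Q j = set0 by rewrite mu_set0 !mulr0.
by apply/seteqP; split => // q PQq; apply: PQ0; exists q.
Qed.

Lemma pos_integral_le n P (b : nat -> R) h :
  disj_family n P -> covers n P ->
  (forall i, (i < n)%N -> forall p, P i p -> h p <= b i) ->
  (exists lo, forall p, lo <= h p) ->
  pos_integral mu h <= \sum_(i < n) b i * mu (P i).
Proof.
move=> dP cP hb hlo; apply: ge_sup.
  exists (lower_sum 1 (cst setT) h), 1%N, (cst setT).
  by split; [exact: disj_family1|split; [exact: covers1|]].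
by move=> _ [m [Q [dQ [cQ ->]]]]; exact: lower_sum_le.
Qed.

Lemma pos_integral_ge n P (a : nat -> R) h :
  disj_family n P -> covers n P ->
  (forall i, (i < n)%N -> forall p, P i p -> a i <= h p) ->
  (exists lo, forall p, lo <= h p) -> (exists hi, forall p, h p <= hi) ->
  \sum_(i < n) a i * mu (P i) <= pos_integral mu h.
Proof.
move=> dP cP ha hlo [hi hhi].
apply: (@le_trans _ _ (lower_sum n P h)).
  apply: ler_sum => i _; have [[p Pp]|P0] := pselect (exists p, P i p).
    apply: ler_wpM2r; first exact: mu_ge0.
    by apply: lb_le_inf; [exists (h p), p|move=> _ [q Pq <-]; exact: ha].
  suff -> : P i = set0 by rewrite mu_set0 !mulr0.
  by apply/seteqP; split => // q Pq; apply: P0; exists q.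
apply: ub_le_sup; last by exists n, P.
exists (\sum_(i < 1) hi * mu (cst setT i)) => _ [m [Q [dQ [cQ ->]]]].
exact: lower_sum_le disj_family1 covers1 (fun i _ p _ => hhi p) hlo dQ cQ.
Qed.

Lemma sum_norm_mu_le n A : disj_family n A -> \sum_(i < n) `|mu (A i)| <= mu setT.
Proof.
move=> dA; pose S p := exists i, (i < n)%N /\ A i p.
suff -> : \sum_(i < n) `|mu (A i)| = mu S by exact: le_mu.
rewrite (mu_partition dA (S := S)) //; apply: eq_bigr => i _.
by rewrite ger0_norm ?mu_ge0 // setIidr // => p Ap; exists i.
Qed.

Lemma totvar_positive : totvar mu = mu setT.
Proof.
apply/le_anti/andP; split.
  by apply: sup_le_ge0 => [_ [n [A [dA ->]]]|]; [exact: sum_norm_mu_le|exact: mu_ge0].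
apply: ub_le_sup; first by exists (mu setT) => _ [n [A [dA ->]]]; exact: sum_norm_mu_le.
by exists 1%N, (cst setT); rewrite big_ord1 ger0_norm ?mu_ge0 //; split => //; exact: disj_family1.
Qed.

Definition split2 (B : set (Mt M)) (i : nat) := if i == 0%N then B else ~` B.

Lemma disj_family_split2 B : disj_family 2 (split2 B).
Proof. by move=> [|[|i]] [|[|j]] // _ _ _; apply/seteqP; split => // p []. Qed.

Lemma covers_split2 B : covers 2 (split2 B).
Proof. by move=> p; have [Bp|nBp] := pselect (B p); [exists 0%N|exists 1%N]. Qed.

Lemma sum_split2 B (b : nat -> R) :
  \sum_(i < 2) b i * mu (split2 B i) = b 0%N * mu B + b 1%N * mu (~` B).
Proof. by rewrite big_ord_recl big_ord1. Qed.

Lemma pos_integral_le_split B (a b : R) h :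
  (forall p, B p -> h p <= a) -> (forall p, ~ B p -> h p <= b) ->
  (exists lo, forall p, lo <= h p) ->
  pos_integral mu h <= a * mu B + b * mu (~` B).
Proof.
move=> hB hnB hlo; pose c i := if i == 0%N then a else b.
rewrite -(sum_split2 B c).
apply: (pos_integral_le (b := c) (disj_family_split2 B) (covers_split2 B) _ hlo).
by move=> [|[|//]] _ p; [exact: hB|exact: hnB].
Qed.

Lemma pos_integral_ge_split B (a b : R) h :
  (forall p, B p -> a <= h p) -> (forall p, ~ B p -> b <= h p) -> bounded h ->
  a * mu B + b * mu (~` B) <= pos_integral mu h.
Proof.
move=> hB hnB [C hC]; pose c i := if i == 0%N then a else b.
rewrite -(sum_split2 B c).
apply: (pos_integral_ge (a := c) (disj_family_split2 B) (covers_split2 B)).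
- by move=> [|[|//]] _ p; [exact: hB|exact: hnB].
- by exists (- C) => p; have := hC p; rewrite ler_norml => /andP[].
- by exists C => p; have := hC p; rewrite ler_norml => /andP[].
Qed.

Lemma pos_integral_sublevel h (gamma : R) : (forall p, `|h p| <= 1) ->
  pos_integral mu h <= mu setT - (1 - gamma) * mu [set p | h p < gamma].
Proof.
move=> h1; rewrite (mu_setIC setT [set p | h p < gamma]) !setTI.
have h_itv p : - 1 <= h p <= 1 by rewrite -ler_norml.
suff : pos_integral mu h <= gamma * mu [set p | h p < gamma] + 1 * mu (~` [set p | h p < gamma]).
  by rewrite mul1r; lra.
apply: pos_integral_le_split => [p /ltW //|p _|]; first by have /andP[] := h_itv p.
by exists (-1) => p; have /andP[] := h_itv p.
Qed.

Lemma partition_tags (t0 : Mt M) (P : nat -> set (Mt M)) :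
  exists t : nat -> Mt M, forall i, (exists p, P i p) -> P i (t i).
Proof.
suff /choice [t ht] : forall i, exists t, (exists p, P i p) -> P i t by exists t.
by move=> i; have [[p Pp]|P0] := pselect (exists p, P i p); [exists p|exists t0].
Qed.

Lemma pos_integral_tagged_sum n P h (e : R) (t : nat -> Mt M) :
  disj_family n P -> covers n P ->
  (forall i, (i < n)%N -> forall p q, P i p -> P i q -> `|h p - h q| <= e) ->
  (forall i, (exists p, P i p) -> P i (t i)) -> bounded h ->
  `|pos_integral mu h - \sum_(i < n) h (t i) * mu (P i)| <= e * mu setT.
Proof.
move=> dP cP osc ht [C hC].
have hlo : exists lo, forall p, lo <= h p.
  by exists (- C) => p; have := hC p; rewrite ler_norml => /andP[].
have hhi : exists hi, forall p, h p <= hi.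
  by exists C => p; have := hC p; rewrite ler_norml => /andP[].
have near_tag i p : (i < n)%N -> P i p -> `|h p - h (t i)| <= e.
  by move=> ilt Pp; exact: osc ilt _ _ Pp (ht i (ex_intro _ p Pp)).
have sumD s : \sum_(i < n) (h (t i) + s) * mu (P i) =
    \sum_(i < n) h (t i) * mu (P i) + s * mu setT.
  by rewrite -(mu_partitionT dP cP) mulr_sumr -big_split; apply: eq_bigr => i _ /=; ring.
have up : pos_integral mu h <= \sum_(i < n) (h (t i) + e) * mu (P i).
  apply: (pos_integral_le (b := fun i => h (t i) + e) dP cP _ hlo) => i ilt p.
  by move=> /(near_tag i p ilt); rewrite ler_norml => /andP[]; lra.
have dn : \sum_(i < n) (h (t i) + - e) * mu (P i) <= pos_integral mu h.
  apply: (pos_integral_ge (a := fun i => h (t i) + - e) dP cP _ hlo hhi) => i ilt p.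
  by move=> /(near_tag i p ilt); rewrite ler_norml => /andP[]; lra.
move: up dn; rewrite !sumD mulNr ler_norml; lra.
Qed.

Lemma truncn_eq_dist (x y : R) : 0 <= x -> 0 <= y ->
  Num.truncn x = Num.truncn y -> `|x - y| < 1.
Proof.
move=> x0 y0 xy; have := truncn_itv x0; have := truncn_itv y0.
by rewrite xy -natr1 ltr_norml => /andP[? ?] /andP[? ?]; apply/andP; split; lra.
Qed.

Lemma bounded_levels h (e : R) : bounded h -> 0 < e ->
  exists (N : nat) (k : Mt M -> nat),
    (forall p, (k p < N)%N) /\ (forall p q, k p = k q -> `|h p - h q| <= e).
Proof.
move=> [C0 hC0] e0.
have [C [hC C_ge0]] : exists C, (forall p, `|h p| <= C) /\ 0 <= C.
  by exists `|C0|; split => // p; exact: le_trans (hC0 p) (ler_norm C0).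
have hC_itv p : - C <= h p <= C by rewrite -ler_norml.
have x0 p : 0 <= (h p + C) / e.
  by apply: divr_ge0 (ltW e0); have /andP[? _] := hC_itv p; lra.
exists (Num.truncn (2 * C / e)).+1, (fun p => Num.truncn ((h p + C) / e)); split.
  move=> p; rewrite ltnS; apply: le_truncn; apply: ler_wpM2r; first by rewrite invr_ge0 ltW.
  by have /andP[_ ?] := hC_itv p; lra.
move=> p q /(truncn_eq_dist (x0 p) (x0 q)).
have -> : (h p + C) / e - (h q + C) / e = (h p - h q) / e by field; lra.
by rewrite normrM (gtr0_norm (x := e^-1)) ?invr_gt0 // ltr_pdivrMr // mul1r => /ltW.
Qed.

Lemma fine_partition (h1 h2 : Mt M -> R) (e : R) : bounded h1 -> bounded h2 -> 0 < e ->
  exists n P, [/\ disj_family n P, covers n P &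
    forall i, (i < n)%N -> forall p q, P i p -> P i q ->
      `|h1 p - h1 q| <= e /\ `|h2 p - h2 q| <= e].
Proof.
move=> b1 b2 e0.
have [N1 [k1 [kN1 osc1]]] := bounded_levels b1 e0.
have [N2 [k2 [kN2 osc2]]] := bounded_levels b2 e0.
pose k p := (k1 p * N2 + k2 p)%N.
exists (N1 * N2)%N, (fun i => [set p | k p = i]); split.
- by move=> i j _ _ ij; apply/seteqP; split => // p [/= kpi kpj]; apply: ij; rewrite -kpi -kpj.
- move=> p; exists (k p); split => //; have := kN1 p; have := kN2 p; rewrite /k; nia.
- move=> i _ p q /= <- /esym kpq; have N2_gt0 := leq_ltn_trans (leq0n _) (kN2 p).
  have e2 : k2 p = k2 q by have := congr1 (modn^~ N2) kpq; rewrite /k !modnMDl !modn_small.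
  have e1 : k1 p = k1 q.
    by have := congr1 (divn^~ N2) kpq; rewrite /k !divnMDl // !divn_small // !addn0.
  by split; [exact: osc1|exact: osc2].
Qed.

Lemma pos_integral_bounded h C : (forall p, `|h p| <= C) -> `|pos_integral mu h| <= C * mu setT.
Proof.
move=> hC.
have lo p : - C <= h p by have := hC p; rewrite ler_norml => /andP[].
have hi p : h p <= C by have := hC p; rewrite ler_norml => /andP[].
have up := pos_integral_le (b := cst C) disj_family1 covers1 (fun i _ p _ => hi p)
  (ex_intro _ _ lo).
have dn := pos_integral_ge (a := cst (- C)) disj_family1 covers1 (fun i _ p _ => lo p)
  (ex_intro _ _ lo) (ex_intro _ _ hi).
by move: up dn; rewrite !big_ord1 /cst ler_norml mulNr => ? ?; apply/andP.
Qed.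

Lemma eq0_norm_le_eps (x K : R) : (forall e, 0 < e -> `|x| <= K * e) -> x = 0.
Proof.
move=> small; apply/normr0_eq0/le_anti; rewrite normr_ge0 andbT.
apply/ler_addgt0Pr => e e0; rewrite add0r.
have K1 : 0 < `|K| + 1 by rewrite ltr_wpDl.
apply: le_trans (small _ (divr_gt0 e0 K1)) _.
rewrite mulrCA ger_pMr // ler_pdivrMr // mul1r.
by apply: le_trans (ler_norm K) _; rewrite lerDl.
Qed.

Lemma pos_integral_axpy (t0 : Mt M) h1 h2 (a : R) : bounded h1 -> bounded h2 ->
  pos_integral mu (fun p => a * h1 p + h2 p) = a * pos_integral mu h1 + pos_integral mu h2.
Proof.
move=> b1 b2; apply/eqP; rewrite -subr_eq0; apply/eqP.
apply: (eq0_norm_le_eps (K := (`|a| * 2 + 2) * mu setT)) => e e0.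
have [n [P [dP cP osc]]] := fine_partition b1 b2 e0.
have [t ht] := partition_tags t0 P.
have bc : bounded (fun p => a * h1 p + h2 p).
  case: b1 b2 => [C1 hC1] [C2 hC2]; exists (`|a| * C1 + C2) => p.
  by apply: le_trans (ler_normD _ _) _; rewrite normrM lerD // ler_wpM2l.
have Ic := pos_integral_tagged_sum (e := (`|a| + 1) * e) dP cP _ ht bc.
have I1 := pos_integral_tagged_sum dP cP (fun i ilt p q Pp Pq => (osc i ilt p q Pp Pq).1) ht b1.
have I2 := pos_integral_tagged_sum dP cP (fun i ilt p q Pp Pq => (osc i ilt p q Pp Pq).2) ht b2.
have {}Ic : `|pos_integral mu (fun p => a * h1 p + h2 p) -
    \sum_(i < n) (a * h1 (t i) + h2 (t i)) * mu (P i)| <= (`|a| + 1) * e * mu setT.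
  apply: Ic => i ilt p q Pp Pq; have [o1 o2] := osc i ilt p q Pp Pq.
  have -> : a * h1 p + h2 p - (a * h1 q + h2 q) = a * (h1 p - h1 q) + (h2 p - h2 q) by ring.
  by apply: le_trans (ler_normD _ _) _; rewrite normrM mulrDl mul1r lerD // ler_wpM2l.
set S1 := \sum_(i < n) _ in I1; set S2 := \sum_(i < n) _ in I2.
have -> : pos_integral mu (fun p => a * h1 p + h2 p) -
    (a * pos_integral mu h1 + pos_integral mu h2) =
  (pos_integral mu (fun p => a * h1 p + h2 p) - (a * S1 + S2)) -
    (a * (pos_integral mu h1 - S1) + (pos_integral mu h2 - S2)) by ring.
rewrite [a * S1 + S2](_ : _ = \sum_(i < n) (a * h1 (t i) + h2 (t i)) * mu (P i)); last first.
  by rewrite mulr_sumr -big_split; apply: eq_bigr => i _ /=; ring.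
apply: le_trans (ler_normB _ _) _; apply: le_trans (lerD Ic (ler_normD _ _)) _.
rewrite normrM; apply: le_trans (lerD (lexx _) (lerD (ler_wpM2l (normr_ge0 a) I1) I2)) _.
lra.
Qed.

End FinitelyAdditiveIntegral.

Section Lipschitz.
Variables (R : realType) (M : Type) (d : M -> M -> R) (z : M).
Hypothesis hd : is_metric d.

Lemma d_ge0 x y : 0 <= d x y. Proof. by case: hd. Qed.
Lemma dC x y : d x y = d y x. Proof. by case: hd => _ [_ []]. Qed.
Lemma d_triangle x y w : d x w <= d x y + d y w. Proof. by case: hd => _ [_ [_]]. Qed.
Lemma dxx x : d x x = 0. Proof. by case: hd => _ [dP _]; apply/dP. Qed.
Lemma d_gt0 x y : x <> y -> 0 < d x y.
Proof. by move=> xy; rewrite lt_neqAle d_ge0 andbT eq_sym; apply/eqP => /(hd.2.1 x y). Qed.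

Lemma lipnorm_ge0 f : 0 <= lipnorm d f.
Proof.
rewrite /lipnorm; set E := [set r | _].
have [supE|supE] := pselect (has_sup E); last by rewrite sup_out.
have [r Er] := supE.1; apply: le_trans (sup_upper_bound supE Er).
by case: Er => x [y [xy ->]]; rewrite divr_ge0 ?d_ge0.
Qed.

Lemma lipnorm_ratio f x y : lipschitz d f -> x <> y ->
  `|f x - f y| / d x y <= lipnorm d f.
Proof.
move=> [L hL] xy; apply: ub_le_sup; last by exists x, y.
by exists L => _ [a [b [ab ->]]]; rewrite ler_pdivrMr ?d_gt0.
Qed.

Lemma lipnorm_bound f c x y : lipschitz d f -> lipnorm d f <= c ->
  `|f x - f y| <= c * d x y.
Proof.
move=> lf fc; have [->|xy] := pselect (x = y); first by rewrite subrr normr0 dxx mulr0.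
by rewrite -ler_pdivrMr ?d_gt0 //; exact: le_trans (lipnorm_ratio lf xy) fc.
Qed.

Lemma lipnorm_le f c : 0 <= c -> (forall x y, `|f x - f y| <= c * d x y) ->
  lipnorm d f <= c.
Proof.
by move=> c0 hc; apply: sup_le_ge0 => // _ [x [y [xy ->]]]; rewrite ler_pdivrMr ?d_gt0.
Qed.

Lemma lipschitz_axpy f g (a : R) : lipschitz d f -> lipschitz d g ->
  lipschitz d (fun x => a * f x + g x).
Proof.
move=> [L1 h1] [L2 h2]; exists (`|a| * `|L1| + `|L2|) => x y.
have -> : a * f x + g x - (a * f y + g y) = a * (f x - f y) + (g x - g y) by ring.
apply: le_trans (ler_normD _ _) _; rewrite normrM mulrDl -mulrA.
have L_le (L : R) : L * d x y <= `|L| * d x y by rewrite ler_wpM2r ?d_ge0 ?ler_norm.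
apply: lerD; last exact: le_trans (h2 x y) (L_le L2).
by rewrite ler_wpM2l //; exact: le_trans (h1 x y) (L_le L1).
Qed.

Lemma Lip0_axpy f g (a : R) : Lip0 d z f -> Lip0 d z g -> Lip0 d z (fun x => a * f x + g x).
Proof. by move=> [lf f0] [lg g0]; split; [exact: lipschitz_axpy|rewrite f0 g0 mulr0 addr0]. Qed.

Lemma norm_deLeeuw_le f p : lipschitz d f -> `|deLeeuw d f p| <= lipnorm d f.
Proof.
move=> lf; case: p => [[x y] xy]; rewrite /deLeeuw /= normrM.
by rewrite (ger0_norm (x := (d x y)^-1)) ?invr_ge0 ?d_ge0 //; exact: lipnorm_ratio.
Qed.

Lemma bounded_deLeeuw f : lipschitz d f -> bounded (deLeeuw d f).
Proof. by move=> lf; exists (lipnorm d f) => p; exact: norm_deLeeuw_le. Qed.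

Lemma deLeeuw_axpy f g (a : R) :
  deLeeuw d (fun x => a * f x + g x) = fun p => a * deLeeuw d f p + deLeeuw d g p.
Proof. by apply/funext => -[[x y] xy]; rewrite /deLeeuw /=; ring. Qed.

End Lipschitz.

Lemma sum_cyclic_telescope (R : realType) (a : nat -> R) n : (0 < n)%N ->
  \sum_(i < n) (a i - a (i.+1 %% n)%N) = 0.
Proof.
case: n => [//|n] _; rewrite sumrB [X in X - _]big_ord_recl [X in _ - X]big_ord_recr /= modnn.
under [X in _ - (X + _)]eq_bigr => i _ do rewrite modn_small ?ltnS //.
by rewrite [_ + a 0%N]addrC; exact: subrr.
Qed.

Section CyclicMonotone.
Variables (R : realType) (M : Type) (d : M -> M -> R) (z : M).
Hypothesis hd : is_metric d.

Definition cyc_cost (gamma : R) (q q' : M * M) :=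
  Num.min (d q.1 q'.2 - gamma * d q.1 q.2) (d q.2 q'.2).

(* Each cost term dominates [F (s i).2 - F (s i.+1).2]; these telescope around the cycle. *)
Lemma cyc_monotone_of_potential (gamma : R) (B : set (M * M)) (F : M -> R) :
  (forall x y, F x - F y <= d x y) ->
  (forall q, B q -> gamma * d q.1 q.2 <= F q.1 - F q.2) -> cyc_monotone d gamma B.
Proof.
move=> F_lip F_B n s n0 sB.
apply: (@le_trans _ _ (\sum_(i < n) (F (s i).2 - F (s (i.+1 %% n)%N).2))).
  by rewrite (sum_cyclic_telescope (fun i => F (s i).2) n0).
apply: ler_sum => i _.
rewrite le_min F_lip andbT.
by have := F_B _ (sB i (ltn_ord i)); have := F_lip (s i).1 (s (i.+1 %% n)%N).2; lra.
Qed.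

Section PotentialOfCycMonotone.
Variables (gamma : R) (B : set (M * M)) (b0 : M * M).
Hypotheses (Bb0 : B b0) (cmB : cyc_monotone d gamma B).

(* Rockafellar's construction: [G x] is the infimum, over chains [s 0, ..., s k = b0]
   in [B], of [d x (s 0).2] plus the costs along the chain. *)
Let chain k (s : nat -> M * M) := (forall i, (i <= k)%N -> B (s i)) /\ s k = b0.
Let chain_cost x k s := d x (s 0%N).2 + \sum_(i < k) cyc_cost gamma (s i) (s i.+1).
Let chain_costs x := [set v | exists k s, chain k s /\ v = chain_cost x k s].
Let G x := inf (chain_costs x).

Lemma chain_cost_lb x k s : chain k s -> - d x b0.2 <= chain_cost x k s.
Proof.
move=> [sB sk]; have := cmB (ltn0Sn k) (fun i ilt => sB i ilt).
rewrite big_ord_recr /= modnn sk.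
under eq_bigr => i _ do rewrite modn_small ?ltnS //.
have : cyc_cost gamma b0 (s 0%N) <= d b0.2 (s 0%N).2 by rewrite /cyc_cost ge_min lexx orbT.
have := d_triangle hd b0.2 x (s 0%N).2; rewrite (dC hd b0.2 x) /chain_cost /cyc_cost; lra.
Qed.

Lemma chain_costs_neq0 x : chain_costs x !=set0.
Proof. by exists (chain_cost x 0 (fun _ => b0)), 0%N, (fun _ => b0). Qed.

Lemma chain_costs_lb x : has_lbound (chain_costs x).
Proof. by exists (- d x b0.2) => _ [k [s [sk ->]]]; exact: chain_cost_lb. Qed.

Lemma G_lipschitz x y : G x - G y <= d x y.
Proof.
suff : G x - d x y <= G y by lra.
apply: lb_le_inf (chain_costs_neq0 y) _ => _ [k [s [sk ->]]].
have : G x <= chain_cost x k s by apply: (ge_inf (chain_costs_lb x)); exists k, s.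
by have := d_triangle hd x y (s 0%N).2; rewrite /chain_cost; lra.
Qed.

(* Prepending [q] to a chain turns its cost from [q.1] into a cost from [q.2],
   lowered by at least [gamma * d q.1 q.2]. *)
Lemma G_gap q : B q -> G q.2 + gamma * d q.1 q.2 <= G q.1.
Proof.
move=> Bq; suff : G q.2 <= G q.1 - gamma * d q.1 q.2 by lra.
rewrite lerBrDr; apply: lb_le_inf (chain_costs_neq0 q.1) _ => _ [k [s [[sB sk] ->]]].
pose s' i := if i is j.+1 then s j else q.
have s'k : chain k.+1 s' by split => // -[|i] //= ilt; apply: sB.
have : G q.2 <= chain_cost q.2 k.+1 s' by apply: (ge_inf (chain_costs_lb q.2)); exists k.+1, s'.
rewrite /chain_cost big_ord_recl /= (dxx hd) add0r.
have : cyc_cost gamma q (s 0%N) <= d q.1 (s 0%N).2 - gamma * d q.1 q.2.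
  by rewrite /cyc_cost ge_min lexx.
by rewrite /bump /=; lra.
Qed.

Lemma cyc_monotone_potential : exists F : M -> R,
  [/\ forall x y, `|F x - F y| <= d x y,
      forall q, B q -> gamma * d q.1 q.2 <= F q.1 - F q.2 & F z = 0].
Proof.
exists (fun x => G x - G z); split; last by rewrite subrr.
- move=> x y; have := G_lipschitz x y; have := G_lipschitz y x.
  by rewrite (dC hd) ler_norml => ? ?; apply/andP; split; lra.
- by move=> q /G_gap; lra.
Qed.

End PotentialOfCycMonotone.
End CyclicMonotone.

Definition cyc_monotone_condition (R : realType) (M : Type) (d : M -> M -> R) (z : M) :=
  forall mu, optimal d z mu -> totvar mu = 1 -> forall gamma : R, 0 < gamma < 1 ->
  exists (A : set (Mt M)) (u v : M),
    u <> v /\ gamma <= mu A /\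
    cyc_monotone d gamma ((@proj1_sig _ _) @` A `|` [set (u, v)]) /\
    cyc_monotone d gamma ((@proj1_sig _ _) @` A `|` [set (v, u)]).

Section Necessity.
Variables (R : realType) (M : Type) (d : M -> M -> R) (z : M).
Hypothesis hd : is_metric d.

Lemma Phistar_dual (mu : set (Mt M) -> R) (t0 : Mt M) :
  fin_additive mu -> positive_measure mu -> is_dual d z (Phistar d mu).
Proof.
move=> mu_add mu_ge0; split.
  move=> a f g [lf _] [lg _]; rewrite /Phistar deLeeuw_axpy.
  exact: pos_integral_axpy (bounded_deLeeuw hd lf) (bounded_deLeeuw hd lg).
exists (mu setT) => f [lf _]; rewrite mulrC.
exact: pos_integral_bounded (fun p => norm_deLeeuw_le hd p lf).
Qed.

Lemma unit_ball_lip f x y : unit_ball d z f -> `|f x - f y| <= d x y.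
Proof. by move=> [[lf _] nf]; rewrite -[d x y]mul1r; exact: lipnorm_bound. Qed.

Lemma unit_ball_deLeeuw f : unit_ball d z f -> forall p, `|deLeeuw d f p| <= 1.
Proof. by move=> [[lf _] nf] p; exact: le_trans (norm_deLeeuw_le hd p lf) nf. Qed.

Lemma LD2P_far_pair phi alpha c : LD2P d z -> is_dual d z phi -> dualnorm d z phi = 1 ->
  0 < alpha -> c < 2 ->
  exists f g, [/\ slice d z phi alpha f, slice d z phi alpha g &
    c < lipnorm d (fun x => f x - g x)].
Proof.
move=> ld2p dual norm1 a0 c2; have := ld2p _ dual norm1 _ a0; rewrite /diam_Lip.
set E := [set r | _] => supE.
have E0 : E !=set0 by apply: sup_neq0_nonempty; rewrite supE pnatr_eq0.
have cE : c < sup E by rewrite supE.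
have [_ [f [g [sf [sg ->]]]] cfg] := sup_gt E0 cE.
by exists f, g.
Qed.

Lemma lipnorm_gt_pair f c : 0 <= c -> c < lipnorm d f ->
  exists u v, u <> v /\ c * d u v < f u - f v.
Proof.
move=> c0 cf; rewrite /lipnorm in cf; set E := [set r | _] in cf.
have E0 : E !=set0 by apply: sup_neq0_nonempty; rewrite gt_eqF // (le_lt_trans c0 cf).
have [_ [x [y [xy ->]]]] := sup_gt E0 cf.
rewrite ltr_pdivlMr ?(d_gt0 hd xy) //; have [fxy|fxy] := lerP 0 (f x - f y).
  by rewrite ger0_norm // => ?; exists x, y.
rewrite ltr0_norm // opprB (dC hd) => ?; exists y, x; split => //; exact: nesym.
Qed.

Lemma cyc_monotone_deLeeuw_ge f gamma (A : set (Mt M)) u v :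
  unit_ball d z f -> (forall p, A p -> gamma <= deLeeuw d f p) ->
  gamma * d u v <= f u - f v ->
  cyc_monotone d gamma ((@proj1_sig _ _) @` A `|` [set (u, v)]).
Proof.
move=> uf fA fuv; apply: (cyc_monotone_of_potential (F := f)).
  by move=> x y; have := unit_ball_lip x y uf; rewrite ler_norml => /andP[].
move=> q [[[[x y] xy] /fA + <-]|->] //=.
by rewrite /deLeeuw /= ler_pdivlMr // (d_gt0 hd).
Qed.

Lemma slice_superlevel_measure mu (gamma : R) f g :
  fin_additive mu -> positive_measure mu -> mu setT = 1 -> gamma < 1 ->
  slice d z (Phistar d mu) ((1 - gamma) ^+ 2 / 4) f ->
  slice d z (Phistar d mu) ((1 - gamma) ^+ 2 / 4) g ->
  gamma <= mu [set p | gamma <= deLeeuw d f p /\ gamma <= deLeeuw d g p].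
Proof.
move=> mu_add mu_ge0 muT g1 sf sg; set A := [set p | _ /\ _].
have sublevel h : slice d z (Phistar d mu) ((1 - gamma) ^+ 2 / 4) h ->
    (1 - gamma) * mu [set p | deLeeuw d h p < gamma] < (1 - gamma) ^+ 2 / 4.
  move=> [uh hI]; have := pos_integral_sublevel mu_add mu_ge0 gamma (unit_ball_deLeeuw uh).
  by rewrite muT; move: hI; rewrite /Phistar; lra.
have nA : ~` A `<=` [set p | deLeeuw d f p < gamma] `|` [set p | deLeeuw d g p < gamma].
  move=> p /= nAp; apply: contrapT => /not_orP[/negP + /negP].
  by rewrite -!leNgt => ? ?; apply: nAp.
have := le_trans (le_mu mu_add mu_ge0 nA) (le_mu_setU mu_add mu_ge0 _ _).
have := sublevel f sf; have := sublevel g sg.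
have := mu_setIC mu_add setT A; rewrite !setTI muT.
have := mu_ge0 [set p | deLeeuw d f p < gamma]; have := mu_ge0 [set p | deLeeuw d g p < gamma].
nra.
Qed.

Lemma LD2P_cyc_monotone : LD2P d z -> cyc_monotone_condition d z.
Proof.
move=> ld2p mu [[mu_add _] [mu_ge0 norm_mu]] tv1 gamma /andP[g0 g1].
have muT : mu setT = 1 by rewrite -(totvar_positive mu_add mu_ge0).
have [t0] : inhabited (Mt M) by apply: (mu_setT_inhabited mu_add); rewrite muT oner_neq0.
have a0 : 0 < (1 - gamma) ^+ 2 / 4 by rewrite divr_gt0 // exprn_gt0 // subr_gt0.
have [c0 c2] : 0 <= 1 + gamma /\ 1 + gamma < 2 by split; lra.
have [f [g [sf sg fg]]] :=
  LD2P_far_pair ld2p (Phistar_dual t0 mu_add mu_ge0) (etrans norm_mu tv1) a0 c2.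
have [u [v [uv /= huv]]] := lipnorm_gt_pair c0 fg.
have [[uf _] [ug _]] := (sf, sg).
have := unit_ball_lip u v uf; have := unit_ball_lip u v ug.
rewrite !ler_norml => /andP[? ?] /andP[? ?].
exists [set p | gamma <= deLeeuw d f p /\ gamma <= deLeeuw d g p], u, v.
split=> //; split; first exact: slice_superlevel_measure.
split; [apply: (cyc_monotone_deLeeuw_ge uf)|apply: (cyc_monotone_deLeeuw_ge ug)] => //.
- by move=> p [].
- by lra.
- by move=> p [].
- by rewrite (dC hd v u); lra.
Qed.

End Necessity.

Section SupFunctional.
Variables (R : realType) (M : Type) (t0 : Mt M).

Definition supf (h : Mt M -> R) := sup [set h t | t in [set: Mt M]].

Lemma supf_ub h t : bounded h -> h t <= supf h.
Proof.
move=> [C hC]; apply: ub_le_sup; last by exists t.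
by exists C => _ [s _ <-]; have := hC s; rewrite ler_norml => /andP[].
Qed.

Lemma supf_le h B : (forall t, h t <= B) -> supf h <= B.
Proof. by move=> hB; apply: ge_sup => [|_ [s _ <-]]; [exists (h t0), t0|]. Qed.

Lemma bounded_axpy (a : R) (x y : Mt M -> R) : bounded x -> bounded y -> bounded (axpy a x y).
Proof.
move=> [C1 h1] [C2 h2]; exists (`|a| * C1 + C2) => t.
by apply: le_trans (ler_normD _ _) _; rewrite normrM lerD // ler_wpM2l.
Qed.

Lemma bounded_cst (c : R) : bounded (cst c : Mt M -> R).
Proof. by exists `|c|. Qed.

Lemma supf_subadd x y : bounded x -> bounded y -> supf (axpy 1 x y) <= supf x + supf y.
Proof. by move=> bx b_y; apply: supf_le => t; rewrite /axpy mul1r lerD ?supf_ub. Qed.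

Lemma supf_homo (a : R) x : 0 < a -> bounded x -> supf (axpy a x (cst 0)) = a * supf x.
Proof.
move=> a0 bx; have bax := bounded_axpy a bx (bounded_cst 0).
apply/le_anti/andP; split.
  by apply: supf_le => t; rewrite /axpy /cst addr0 ler_pM2l // supf_ub.
rewrite -ler_pdivlMl //; apply: supf_le => t.
by rewrite ler_pdivlMl //; have := supf_ub t bax; rewrite /axpy /cst addr0.
Qed.

End SupFunctional.

Section DominatedFunctional.
Variables (R : realType) (M : Type) (t0 : Mt M) (L : (Mt M -> R) -> R).
Hypotheses (L_axpy : forall a x y, bounded x -> bounded y -> L (axpy a x y) = a * L x + L y)
  (L_le_supf : forall x, bounded x -> L x <= supf x).

Lemma L_cst0 : L (cst 0) = 0.
Proof.
have := L_axpy 1 (bounded_cst _ 0) (bounded_cst _ 0).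
have -> : axpy 1 (cst 0) (cst 0) = cst 0 :> (Mt M -> R).
  by apply/funext => t; rewrite /axpy /cst mul1r addr0.
lra.
Qed.

Lemma L_le h k : bounded h -> bounded k -> (forall t, h t <= k t) -> L h <= L k.
Proof.
move=> bh bk hk; suff : L (axpy (-1) k h) <= 0 by rewrite L_axpy //; lra.
apply: le_trans (L_le_supf (bounded_axpy (-1) bk bh)) (supf_le t0 _) => t.
by rewrite /axpy; have := hk t; lra.
Qed.

Lemma L_cst c : L (cst c) = c.
Proof.
have -> : cst c = axpy c (cst 1) (cst 0) :> (Mt M -> R).
  by apply/funext => t; rewrite /axpy /cst mulr1 addr0.
rewrite (L_axpy _ (bounded_cst _ 1) (bounded_cst _ 0)) L_cst0 addr0.
suff -> : L (cst 1) = 1 by rewrite mulr1.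
apply/le_anti/andP; split; first by apply: le_trans (L_le_supf (bounded_cst _ _)) (supf_le t0 _).
have := L_le_supf (bounded_axpy (-1) (bounded_cst _ 1) (bounded_cst _ 0)).
rewrite (L_axpy _ (bounded_cst _ 1) (bounded_cst _ 0)) L_cst0 addr0 => L1.
have : supf (axpy (-1) (cst 1) (cst 0) : Mt M -> R) <= -1.
  by apply: (supf_le t0) => t; rewrite /axpy /cst; lra.
lra.
Qed.

Definition muL (A : set (Mt M)) := L \1_A.

Lemma indic_bounded (A : set (Mt M)) : bounded (\1_A : Mt M -> R).
Proof. by exists 1 => t; rewrite indicE; case: (_ \in _); rewrite ?normr1 ?normr0. Qed.

Lemma muL_add : fin_additive muL.
Proof.
move=> A B AB; rewrite /muL -[L \1_A]mul1r -(L_axpy _ (indic_bounded A) (indic_bounded B)).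
congr L; apply/funext => t; rewrite /axpy mul1r !indicE in_setU.
case: (boolP (t \in A)) => [/set_mem At|_]; case: (boolP (t \in B)) => [/set_mem Bt|_];
  rewrite /= ?addr0 ?add0r //.
by have /seteqP[+ _] := AB => /(_ t (conj At Bt)).
Qed.

Lemma muL_ge0 : positive_measure muL.
Proof.
move=> A; rewrite -(L_cst 0); apply: L_le (bounded_cst _ _) (indic_bounded A) _ => t.
by rewrite indicE /cst.
Qed.

Lemma muL_setT : muL setT = 1.
Proof. by rewrite /muL indicT L_cst. Qed.

Lemma L_near h k (e : R) : bounded h -> bounded k -> (forall t, `|h t - k t| <= e) ->
  `|L h - L k| <= e.
Proof.
move=> bh bk hk.
have L_shift c : L (axpy 1 k (cst c)) = L k + c.
  by rewrite (L_axpy _ bk (bounded_cst _ c)) L_cst mul1r.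
have up : L h <= L k + e.
  rewrite -L_shift; apply: L_le => // [|t]; first exact: bounded_axpy bk (bounded_cst _ _).
  by rewrite /axpy /cst mul1r; have := hk t; rewrite ler_norml => /andP[]; lra.
have dn : L k - e <= L h.
  rewrite -L_shift; apply: L_le => // [|t]; first exact: bounded_axpy bk (bounded_cst _ _).
  by rewrite /axpy /cst mul1r; have := hk t; rewrite ler_norml => /andP[]; lra.
by rewrite ler_norml; apply/andP; split; lra.
Qed.

Lemma step_bounded n (c : nat -> R) (P : nat -> set (Mt M)) :
  bounded (fun t => \sum_(i < n) c i * \1_(P i) t).
Proof.
exists (\sum_(i < n) `|c i|) => t; apply: le_trans (ler_norm_sum _ _ _) _.
apply: ler_sum => i _; rewrite normrM -[leRHS]mulr1 ler_wpM2l //.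
by rewrite indicE; case: (_ \in _); rewrite ?normr1 ?normr0.
Qed.

Lemma L_step n (c : nat -> R) (P : nat -> set (Mt M)) :
  L (fun t => \sum_(i < n) c i * \1_(P i) t) = \sum_(i < n) c i * muL (P i).
Proof.
elim: n => [|n IH].
  by rewrite big_ord0 -[RHS](L_cst 0); congr L; apply/funext => t; rewrite big_ord0.
have -> : (fun t => \sum_(i < n.+1) c i * \1_(P i) t) =
    axpy (c n) \1_(P n) (fun t => \sum_(i < n) c i * \1_(P i) t).
  by apply/funext => t; rewrite big_ord_recr /= /axpy addrC.
by rewrite (L_axpy _ (indic_bounded _) (step_bounded _ _ _)) IH big_ord_recr /= addrC.
Qed.

(* A fine tagged partition makes [h] uniformly close to a step function, on which
   [L] and the integral against [muL] agree. *)
Lemma pos_integral_muL h : bounded h -> pos_integral muL h = L h.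
Proof.
move=> bh; apply/eqP; rewrite -subr_eq0; apply/eqP.
apply: (eq0_norm_le_eps (K := 2)) => e e0.
have [n [P [dP cP osc]]] := fine_partition bh bh e0.
have [t ht] := partition_tags t0 P.
have := pos_integral_tagged_sum muL_add muL_ge0 dP cP
  (fun i ilt p q Pp Pq => (osc i ilt p q Pp Pq).1) ht bh.
rewrite muL_setT mulr1 -(L_step n (fun i => h (t i)) P).
pose k p := \sum_(i < n) h (t i) * \1_(P i) p; rewrite -/k.
have bk : bounded k := step_bounded n (fun i => h (t i)) P.
have hk p : `|h p - k p| <= e.
  have [j [jlt Pj]] := cP p.
  suff -> : k p = h (t j) by exact: (osc j jlt p (t j) Pj (ht j (ex_intro _ p Pj))).1.
  rewrite /k (bigD1 (Ordinal jlt)) //= indicE mem_set // mulr1 big1 ?addr0 // => i ij.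
  rewrite indicE memNset ?mulr0 // => Pi; move: ij.
  by rewrite -val_eqE /= (disj_familyP dP (ltn_ord i) jlt Pi Pj) eqxx.
have := L_near bh bk hk; rewrite !ler_norml => /andP[? ?] /andP[? ?].
by apply/andP; split; lra.
Qed.

End DominatedFunctional.

Section Sufficiency.
Variables (R : realType) (M : Type) (d : M -> M -> R) (z : M).
Hypothesis hd : is_metric d.

Lemma Lip0_cst0 : Lip0 d z (cst 0).
Proof. by split => //; exists 0 => x y; rewrite subrr normr0 mul0r. Qed.

Lemma unit_ball_sub_bound f g x y : unit_ball d z f -> unit_ball d z g ->
  `|f x - g x - (f y - g y)| <= 2 * d x y.
Proof.
move=> uf ug; have -> : f x - g x - (f y - g y) = (f x - f y) - (g x - g y) by ring.
apply: le_trans (ler_normB _ _) _.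
by have := unit_ball_lip hd x y uf; have := unit_ball_lip hd x y ug; lra.
Qed.

Lemma unit_ball_dist f g : unit_ball d z f -> unit_ball d z g ->
  lipnorm d (fun x => f x - g x) <= 2.
Proof. by move=> uf ug; apply: lipnorm_le => // x y; exact: unit_ball_sub_bound. Qed.

Lemma deLeeuw_inj f g : Lip0 d z f -> Lip0 d z g -> deLeeuw d f = deLeeuw d g -> f = g.
Proof.
move=> [_ f0] [_ g0] fg; apply/funext => x; have [->|xz] := pselect (x = z); first by rewrite f0 g0.
have := congr1 (fun h => h (exist (fun p : M * M => p.1 <> p.2) (x, z) xz)) fg.
rewrite /deLeeuw /= f0 g0 !subr0; apply: mulIf.
by rewrite invr_eq0 gt_eqF ?(d_gt0 hd).
Qed.

Variable phi : (M -> R) -> R.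
Hypotheses (phi_dual : is_dual d z phi) (phi_norm : dualnorm d z phi = 1).

Lemma phi0 : phi (cst 0) = 0.
Proof.
have := phi_dual.1 1 _ _ Lip0_cst0 Lip0_cst0.
have -> : (fun x => 1 * cst 0 x + cst 0 x) = cst 0 :> (M -> R).
  by apply/funext => x; rewrite /cst mulr0 addr0.
lra.
Qed.

Lemma phiZ f a : Lip0 d z f -> phi (fun x => a * f x) = a * phi f.
Proof.
move=> lf; have := phi_dual.1 a _ _ lf Lip0_cst0; rewrite phi0 addr0 => <-.
by congr phi; apply/funext => x; rewrite /cst addr0.
Qed.

Lemma dual_inhabited : inhabited (Mt M).
Proof.
apply: contrapT => Mt0.
have Lip0_eq0 f : Lip0 d z f -> f = cst 0.
  move=> [_ f0]; apply/funext => x; apply: contrapT => fx; apply: Mt0.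
  have xz : x <> z by move=> xz; apply: fx; rewrite xz f0.
  by exists; exact: (exist (fun p : M * M => p.1 <> p.2) (x, z) xz).
have : dualnorm d z phi <= 0.
  apply: sup_le_ge0 => // _ [f [[lf _] ->]].
  by rewrite (Lip0_eq0 f lf) phi0 normr0.
by rewrite phi_norm ler10.
Qed.

Lemma norm_phi_le1 f : unit_ball d z f -> `|phi f| <= 1.
Proof.
move=> uf; rewrite -phi_norm; apply: ub_le_sup; last by exists f.
have [_ [C hC]] := phi_dual; exists `|C| => _ [g [[lg ng] ->]].
apply: le_trans (hC g lg) _; rewrite -[leRHS]mulr1.
apply: le_trans (ler_wpM2r (lipnorm_ge0 hd g) (ler_norm C)) _.
exact: ler_wpM2l.
Qed.

Lemma phi_le_lipnorm f : Lip0 d z f -> phi f <= lipnorm d f.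
Proof.
move=> lf; have [L0|L_gt0] := eqVneq (lipnorm d f) 0.
  have -> : f = cst 0.
    apply/funext => x; have := lipnorm_bound hd x z lf.1 (lexx _).
    by rewrite L0 mul0r lf.2 subr0 normr_le0 => /eqP.
  by rewrite phi0 lipnorm_ge0.
have {L_gt0}L_gt0 : 0 < lipnorm d f by rewrite lt_neqAle eq_sym L_gt0 lipnorm_ge0.
set L := lipnorm d f in L_gt0 *.
have lg : Lip0 d z (fun x => L^-1 * f x).
  by have := Lip0_axpy hd L^-1 lf Lip0_cst0; rewrite /cst; under eq_fun do rewrite addr0.
have ug : unit_ball d z (fun x => L^-1 * f x).
  split => //; apply: lipnorm_le => // x y.
  rewrite -mulrBr normrM gtr0_norm ?invr_gt0 // mul1r ler_pdivrMl //.
  exact: (lipnorm_bound hd x y lf.1 (lexx _)).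
have := norm_phi_le1 ug; rewrite phiZ // normrM gtr0_norm ?invr_gt0 // ler_pdivrMl // mulr1.
exact: le_trans (ler_norm _).
Qed.

Definition deLeeuw_graph := [set q | exists f, Lip0 d z f /\ q = (deLeeuw d f, phi f)].

(* [supf] bounds [deLeeuw d f] at both [(x, y)] and [(y, x)], hence its absolute value. *)
Lemma lipnorm_le_supf (t0 : Mt M) f : Lip0 d z f -> lipnorm d f <= supf (deLeeuw d f).
Proof.
move=> [lf _]; have bf := bounded_deLeeuw hd lf.
have pair_le x y (xy : x <> y) : f x - f y <= supf (deLeeuw d f) * d x y.
  have := supf_ub (exist (fun p : M * M => p.1 <> p.2) (x, y) xy) bf.
  by rewrite /deLeeuw /= ler_pdivrMr ?(d_gt0 hd).
have supf_ge0 : 0 <= supf (deLeeuw d f).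
  case: t0 => -[x y] /= xy; have := pair_le x y xy; have := pair_le y x (nesym xy).
  rewrite (dC hd y x) => ? ?; rewrite -(pmulr_lge0 _ (d_gt0 hd xy)); lra.
apply: lipnorm_le => // x y; have [<-|xy] := pselect (x = y).
  by rewrite subrr normr0 (dxx hd) mulr0.
have := pair_le x y xy; have := pair_le y x (nesym xy).
by rewrite (dC hd y x) ler_norml => ? ?; apply/andP; split; lra.
Qed.

Lemma dominated_deLeeuw_graph (t0 : Mt M) :
  dominated_graph (@bounded R M) (@supf R M) deLeeuw_graph.
Proof.
split.
- move=> x r r' [f [lf [-> ->]]] [g [lg [fg ->]]].
  by rewrite (deLeeuw_inj lf lg fg).
- move=> a x y r s [f [lf [-> ->]]] [g [lg [-> ->]]].
  exists (fun x => a * f x + g x); split; first exact: Lip0_axpy.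
  by rewrite deLeeuw_axpy (phi_dual.1 a _ _ lf lg).
- move=> x r [f [lf [-> ->]]]; exact: le_trans (phi_le_lipnorm lf) (lipnorm_le_supf t0 lf).
- by move=> x r [f [[lf _] [-> _]]]; exact: bounded_deLeeuw.
Qed.

(* Hahn-Banach, applied to [phi] transported to the de Leeuw image of [Lip0]. *)
Lemma phi_extension (t0 : Mt M) : exists L : (Mt M -> R) -> R,
  [/\ forall a x y, bounded x -> bounded y -> L (axpy a x y) = a * L x + L y,
      forall x, bounded x -> L x <= supf x &
      forall f, Lip0 d z f -> L (deLeeuw d f) = phi f].
Proof.
have graph0 : deLeeuw_graph (cst 0, 0).
  exists (cst 0); split; first exact: Lip0_cst0.
  by congr pair; [apply/funext => p; rewrite /deLeeuw /cst subrr mul0r|rewrite phi0].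
have [L [L_axpy L_le L_phi]] := hahn_banach (@bounded_axpy _ _) (supf_subadd t0)
  (@supf_homo _ _ t0) (dominated_deLeeuw_graph t0) graph0.
by exists L; split => // f lf; apply: L_phi; exists f.
Qed.

Lemma phi_representing_measure : exists mu : set (Mt M) -> R,
  [/\ optimal d z mu, totvar mu = 1 & forall f, Lip0 d z f -> Phistar d mu f = phi f].
Proof.
have [t0] := dual_inhabited.
have [L [L_axpy L_le L_phi]] := phi_extension t0.
have mu_add := muL_add L_axpy; have mu_ge0 := muL_ge0 t0 L_axpy L_le.
have tv1 : totvar (muL L) = 1 by rewrite totvar_positive // muL_setT.
have rep f : Lip0 d z f -> Phistar d (muL L) f = phi f.
  by move=> lf; rewrite /Phistar pos_integral_muL ?L_phi //; exact: bounded_deLeeuw lf.1.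
exists (muL L); split => //; split; last split => //.
  by split => //; exists (muL L setT); exact: sum_norm_mu_le.
rewrite tv1 -phi_norm; congr sup; apply/seteqP.
by split => _ [f [uf ->]]; exists f; rewrite rep //; case: uf.
Qed.

Lemma slice_potential mu (A : set (Mt M)) (gamma alpha : R) (b0 : M * M) :
  fin_additive mu -> positive_measure mu -> mu setT = 1 ->
  (forall f, Lip0 d z f -> Phistar d mu f = phi f) ->
  0 <= gamma -> gamma <= mu A -> 1 - alpha < (1 + gamma) * gamma - 1 ->
  cyc_monotone d gamma ((@proj1_sig _ _) @` A `|` [set b0]) ->
  exists F, slice d z phi alpha F /\ gamma * d b0.1 b0.2 <= F b0.1 - F b0.2.
Proof.
move=> mu_add mu_ge0 muT rep g0 gA ga cmA.
have [F [F_lip F_gap F0]] := cyc_monotone_potential z hd (or_intror erefl) cmA.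
exists F; split; last exact: F_gap (or_intror erefl).
have lF : Lip0 d z F by split => //; exists 1 => x y; rewrite mul1r.
have uF : unit_ball d z F by split => //; apply: lipnorm_le => // x y; rewrite mul1r.
split => //; rewrite -rep // /Phistar.
have : gamma * mu A + (-1) * mu (~` A) <= pos_integral mu (deLeeuw d F).
  apply: pos_integral_ge_split => //; last exact: bounded_deLeeuw lF.1.
  - move=> [[x y] xy] Ap; rewrite /deLeeuw /= ler_pdivlMr ?(d_gt0 hd) //.
    by apply: (F_gap (x, y)); left; exists (exist _ (x, y) xy).
  - by move=> p _; have := unit_ball_deLeeuw hd uF p; rewrite ler_norml => /andP[].
have := mu_setIC mu_add setT A; rewrite !setTI muT.
have : (1 + gamma) * gamma <= (1 + gamma) * mu A by rewrite ler_wpM2l //; lra.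
lra.
Qed.

Lemma diam_slice_ge (alpha gamma : R) : cyc_monotone_condition d z ->
  0 < gamma < 1 -> 1 - alpha < (1 + gamma) * gamma - 1 ->
  2 * gamma <= diam_Lip d (slice d z phi alpha).
Proof.
move=> H g01 ga; have /andP[g0 _] := g01.
have [mu [opt tv1 rep]] := phi_representing_measure.
have [[mu_add _] [mu_ge0 _]] := opt.
have muT : mu setT = 1 by rewrite -totvar_positive.
have [A [u [v [uv [gA [cm1 cm2]]]]]] := H mu opt tv1 gamma g01.
have [F1 [sF1 F1uv]] := slice_potential mu_add mu_ge0 muT rep (ltW g0) gA ga cm1.
have [F2 [sF2 F2vu]] := slice_potential mu_add mu_ge0 muT rep (ltW g0) gA ga cm2.
apply: (@le_trans _ _ (lipnorm d (fun x => F1 x - F2 x))); last first.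
  apply: ub_le_sup; last by exists F1, F2.
  by exists 2 => _ [f [g [sf [sg ->]]]]; exact: unit_ball_dist sf.1 sg.1.
have l12 : lipschitz d (fun x => F1 x - F2 x).
  by exists 2 => x y; exact: unit_ball_sub_bound sF1.1 sF2.1.
apply: le_trans (lipnorm_ratio hd l12 uv); rewrite ler_pdivlMr ?(d_gt0 hd) //.
by move: F2vu; rewrite /= (dC hd v u) => ?; apply: le_trans (ler_norm _); lra.
Qed.

End Sufficiency.

Lemma cyc_monotone_LD2P (R : realType) (M : Type) (d : M -> M -> R) (z : M) :
  is_metric d -> cyc_monotone_condition d z -> LD2P d z.
Proof.
move=> hd H phi dual norm1 alpha a0; apply/le_anti/andP; split.
  by apply: sup_le_ge0 => // _ [f [g [sf [sg ->]]]]; exact: unit_ball_dist sf.1 sg.1.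
apply/ler_addgt0Pr => e e0; pose m := Num.min e (Num.min alpha 1).
have m0 : 0 < m by rewrite !lt_min e0 a0 ltr01.
have [me ma m1] : [/\ m <= e, m <= alpha & m <= 1] by split; rewrite !ge_min lexx ?orbT.
have g01 : 0 < 1 - m / 4 < 1 by apply/andP; split; lra.
have ga : 1 - alpha < (1 + (1 - m / 4)) * (1 - m / 4) - 1 by nra.
by have := diam_slice_ge hd dual norm1 H g01 ga; lra.
Qed.

Theorem proposition3p2 (R : realType) (M : Type) (d : M -> M -> R) (z : M)
  (hd : is_metric d) :
  LD2P d z <->
  (forall mu : set (Mt M) -> R, optimal d z mu -> totvar mu = 1 ->
   forall gamma : R, 0 < gamma < 1 ->
   exists (A : set (Mt M)) (u v : M),
     u <> v /\ gamma <= mu A /\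
     cyc_monotone d gamma ((@proj1_sig _ _) @` A `|` [set (u, v)]) /\
     cyc_monotone d gamma ((@proj1_sig _ _) @` A `|` [set (v, u)])).
Proof. by split; [exact: LD2P_cyc_monotone|exact: cyc_monotone_LD2P]. Qed.
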